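(* Let $\mathcal{R}$ be a left-connected rewriting system over a signature $\Sigma$, let $L_1\xleftarrow{[i_1,o_1]}K_1\to R_1$ and $L_2\xleftarrow{[i_2,o_2]}K_2\to R_2$ be rules of $\mathcal{R}$, and let $(g_1,g_2\colon G\to L_1+L_2)$ be a gluing scheme yielding a pre-critical pair, with gluing $\epsilon\colon L_1+L_2\twoheadrightarrow S=\mathtt{coeq}(g_1,g_2)$ and interface $in(S)+out(S)\xrightarrow{[\subseteq,\subseteq]}S$. This pre-critical pair is parallel if and only if both of the following hold: (1) no hyperedge of $L_1$ is glued to a hyperedge of $L_2$; and (2) whenever a node $v_1$ of $L_1$ and a node $v_2$ of $L_2$ are glued, $v_1$ lies in the interface of $L_1$ (the image of $[i_1,o_1]$, i.e. $in(L_1)\cup out(L_1)$) and $v_2$ lies in the interface of $L_2$ (the image of $[i_2,o_2]$).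
   Context: A signature $\Sigma$ is a set of triples $(x,n,m)$ (label, arity, coarity). A $\Sigma$-hypergraph $G=(V,E,s,t,l)$ has finite sets $V$ (nodes), $E$ (hyperedges), maps $s,t\colon E\to V^*$ (lists of sources/targets) and a labelling $l\colon E\to\Sigma$ sending a hyperedge with $n$ sources and $m$ targets to some $(x,n,m)$. Morphisms preserve sources, targets and labels; they form the category $\mathbf{Hyp}_\Sigma$, where colimits are computed componentwise and monos/epis are injective/surjective on nodes and hyperedges. Composition is written $f;g$; $\iota_1,\iota_2$ are coprojections. A hypergraph is discrete if it has no hyperedges. A path is a list of hyperedges $[e_1,\dots,e_n]$ with some target of $e_k$ equal to a source of $e_{k+1}$ for each $k$; it goes from $v$ to $v'$ if $v$ is a source of $e_1$ and $v'$ a target of $e_n$; a cycle is a path with some source of $e_1$ a target of $e_n$. In-degree (out-degree) of a node $v$: number of pairs $(e,i)$ with $v$ the $i$-th target (source) of $e$; $in(H)$, $out(H)$: nodes of in-degree $0$, out-degree $0$. $H$ is ma (monogamous acyclic) if it has no cycle and all in- and out-degrees are $\le 1$. A cospan $I\to H\leftarrow O$ with $I,O$ discrete is an ma-cospan if $H$ is ma and the legs are mono with images $in(H)$ and $out(H)$. $H$ is strongly connected if for all $x\in in(H)$, $y\in out(H)$ there is a path from $x$ to $y$. A left-connected rule is a span $L\xleftarrow{[i_L,o_L]}K=I+O\xrightarrow{[i_R,o_R]}R$ with $I,O$ discrete, $I\to L\leftarrow O$ and $I\to R\leftarrow O$ ma-cospans, $[i_L,o_L]$ mono and $L$ strongly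 connected; a left-connected rewriting system is a finite set of such rules. A convex match is a mono $m\colon L\to G$ such that every path in $G$ between two nodes of $m(L)$ has all its hyperedges in $m(L)$. A derivation between ma-cospans $n\to G\leftarrow m$ and $n\to H\leftarrow m$ via a rule $L\leftarrow K\to R$ is given by a convex match $L\to G$, a hypergraph $C$ and a diagram $G\leftarrow C\to H$, $K\to C$, $R\to H$, $n+m\to C$ in which $K,L,C,G$ and $K,R,C,H$ are pushout squares (the left one a boundary complement, automatic for left-connected systems) and everything commutes with the interfaces; for left-connected systems mono matches are automatically convex and pushout complements exist uniquely. A pre-critical pair consists of two derivations, via rules $L_1\leftarrow K_1\to R_1$ and $L_2\leftarrow K_2\to R_2$ with pushout complements $C_1, C_2$, from a common ma-cospan $n\to S\leftarrow m$ with matches $m_1,m_2$ such that $[m_1,m_2]\colon L_1+L_2\to S$ is epi. It is parallel if there exist morphisms $g_1\colon L_1\to C_2$ and $g_2\colon L_2\to C_1$ such that $g_1$ followed by $C_2\to S$ equals $m_1$ and $g_2$ followed by $C_1\to S$ equals $m_2$. A gluing scheme for $L_1,L_2$ is a $\Sigma$-hypergraph $G$ with morphisms $g_1,g_2\colon G\to L_1+L_2$; its gluing is the coequaliser $\epsilon\colon L_1+L_2\to S=\mathtt{coeq}(g_1,g_2)$. Two nodes (or hyperedges) $x,x'$ of $L_1+L_2$ are glued if some node (hyperedge) $y$ of $G$ has $g_1(y)=x$, $g_2(y)=x'$. The gluing scheme yields a pre-critical pair if $\iota_1;\epsilon$ and $\iota_2;\epsilon$ are mono and $in(S)\xrightarrow{\subseteq}S\xleftarrow{\subseteq}out(S)$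 is an ma-cospan; the pre-critical pair is then formed by the (unique) derivations from this ma-cospan with matches $\iota_1;\epsilon$ and $\iota_2;\epsilon$. *)

From HB Require Import structures.
From mathcomp Require Import all_boot.
Set Implicit Arguments. Unset Strict Implicit. Unset Printing Implicit Defensive.

Record signature := Signature {
  slab : Type;
  sar : slab -> nat;
  scoar : slab -> nat }.

Section Hypergraphs.
Variable Sg : signature.

Record hyp := Hyp {
  hV : finType;
  hE : finType;
  hsrc : hE -> seq hV;
  htgt : hE -> seq hV;
  hlab : hE -> slab Sg;
  hsrc_ar : forall e, size (hsrc e) = sar (hlab e);
  htgt_ar : forall e, size (htgt e) = scoar (hlab e) }.

Record mor (G H : hyp) := Mor {
  mV : hV G -> hV H;
  mE : hE G -> hE H;
  msrc : forall e, hsrc (mE e) = map mV (hsrc e);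
  mtgt : forall e, htgt (mE e) = map mV (htgt e);
  mlab : forall e, hlab (mE e) = hlab e }.

Definition mor_eq G H (f g : mor G H) :=
  (forall v, mV f v = mV g v) /\ (forall e, mE f e = mE g e).

Definition mcomp G H K (f : mor G H) (g : mor H K) : mor G K.
Proof.
refine (@Mor G K (fun v => mV g (mV f v)) (fun e => mE g (mE f e)) _ _ _).
- by move=> e; rewrite msrc msrc -map_comp.
- by move=> e; rewrite mtgt mtgt -map_comp.
- by move=> e; rewrite !mlab.
Defined.

Definition mono G H (f : mor G H) := injective (mV f) /\ injective (mE f).

Definition coprod (G H : hyp) : hyp.
Proof.
refine (@Hyp (hV G + hV H)%type (hE G + hE H)%type
  (fun e => match e with inl e => map inl (hsrc e) | inr e => map inr (hsrc e) end)
  (fun e => match e with inl e => map inl (htgt e) | inr e => map inr (htgt e) end)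
  (fun e => match e with inl e => hlab e | inr e => hlab e end) _ _).
- by case=> e; rewrite size_map hsrc_ar.
- by case=> e; rewrite size_map htgt_ar.
Defined.

Definition iota1 G H : mor G (coprod G H).
Proof. by refine (@Mor G (coprod G H) inl inl _ _ _). Defined.

Definition iota2 G H : mor H (coprod G H).
Proof. by refine (@Mor H (coprod G H) inr inr _ _ _). Defined.

Definition is_coeq G A S (g1 g2 : mor G A) (eps : mor A S) :=
  mor_eq (mcomp g1 eps) (mcomp g2 eps) /\
  forall X (f : mor A X), mor_eq (mcomp g1 f) (mcomp g2 f) ->
    exists u : mor S X, mor_eq (mcomp eps u) f /\
      forall u' : mor S X, mor_eq (mcomp eps u') f -> mor_eq u u'.

Definition is_pushout A B C D (f : mor A B) (g : mor A C) (h : mor B D) (k : mor C D) :=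
  mor_eq (mcomp f h) (mcomp g k) /\
  forall X (h' : mor B X) (k' : mor C X), mor_eq (mcomp f h') (mcomp g k') ->
    exists u : mor D X, [/\ mor_eq (mcomp h u) h', mor_eq (mcomp k u) k' &
      forall u' : mor D X, mor_eq (mcomp h u') h' -> mor_eq (mcomp k u') k' -> mor_eq u u'].

Definition indeg (G : hyp) (v : hV G) := \sum_(e : hE G) count_mem v (htgt e).
Definition outdeg (G : hyp) (v : hV G) := \sum_(e : hE G) count_mem v (hsrc e).

Definition discrete (G : hyp) := #|hE G| = 0.

Definition estep (G : hyp) (e e' : hE G) := has (fun v => v \in hsrc e') (htgt e).
Definition is_cycle (G : hyp) (e : hE G) (s : seq (hE G)) :=
  path (@estep G) e s && has (fun v => v \in hsrc e) (htgt (last e s)).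
Definition path_from_to (G : hyp) (v v' : hV G) :=
  exists (e : hE G) (s : seq (hE G)),
    [&& path (@estep G) e s, v \in hsrc e & v' \in htgt (last e s)].

Definition is_ma (G : hyp) :=
  (forall e s, ~~ @is_cycle G e s) /\
  (forall v : hV G, indeg v <= 1 /\ outdeg v <= 1).

Definition strongly_connected (G : hyp) :=
  forall x y : hV G, indeg x = 0 -> outdeg y = 0 -> path_from_to x y.

Definition ma_cospan I O H (i : mor I H) (o : mor O H) :=
  [/\ discrete I, discrete O, is_ma H, mono i /\ mono o &
      (forall v, (exists x, mV i x = v) <-> indeg v = 0) /\
      (forall v, (exists x, mV o x = v) <-> outdeg v = 0)].

Definition disc_of (G : hyp) (P : pred (hV G)) : hyp.
Proof.
refine (@Hyp {x : hV G | P x} void (fun e => match e with end)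
  (fun e => match e with end) (fun e => match e with end) _ _); by case.
Defined.

Definition disc_incl (G : hyp) (P : pred (hV G)) : mor (disc_of P) G.
Proof. by refine (@Mor (disc_of P) G val (fun e => match e with end) _ _ _); case. Defined.

Definition in_nodes (G : hyp) : pred (hV G) := fun v => indeg v == 0.
Definition out_nodes (G : hyp) : pred (hV G) := fun v => outdeg v == 0.

Record rule := Rule {
  rI : hyp; rO : hyp; rL : hyp; rR : hyp;
  rl : mor (coprod rI rO) rL;
  rr : mor (coprod rI rO) rR }.

Definition left_connected_rule (r : rule) :=
  [/\ discrete (rI r) /\ discrete (rO r),
      ma_cospan (mcomp (@iota1 _ _) (rl r)) (mcomp (@iota2 _ _) (rl r)),
      ma_cospan (mcomp (@iota1 _ _) (rr r)) (mcomp (@iota2 _ _) (rr r)),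
      mono (rl r) & strongly_connected (rL r)].

Fixpoint rule_in (r : rule) (Rs : seq rule) : Prop :=
  match Rs with [::] => False | r' :: Rs' => r = r' \/ rule_in r Rs' end.

Definition left_connected_system (Rs : seq rule) :=
  forall r, rule_in r Rs -> left_connected_rule r.

Definition in_Linterface (r : rule) (v : hV (rL r)) := exists k, mV (rl r) k = v.

Definition glued_V G A (g1 g2 : mor G A) (x x' : hV A) :=
  exists y, mV g1 y = x /\ mV g2 y = x'.
Definition glued_E G A (g1 g2 : mor G A) (x x' : hE A) :=
  exists y, mE g1 y = x /\ mE g2 y = x'.

Definition yields_precritical L1 L2 S (eps : mor (coprod L1 L2) S) :=
  [/\ mono (mcomp (@iota1 _ _) eps), mono (mcomp (@iota2 _ _) eps) &
      ma_cospan (disc_incl (@in_nodes S)) (disc_incl (@out_nodes S))].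

Definition parallel L1 L2 C1 C2 S (m1 : mor L1 S) (m2 : mor L2 S)
    (c1 : mor C1 S) (c2 : mor C2 S) :=
  (exists h1 : mor L1 C2, mor_eq (mcomp h1 c2) m1) /\
  (exists h2 : mor L2 C1, mor_eq (mcomp h2 c1) m2).

End Hypergraphs.

From HB Require Import structures.
From mathcomp Require Import all_boot.
Set Implicit Arguments. Unset Strict Implicit. Unset Printing Implicit Defensive.

(* The gluing S is the quotient of L1 + L2 by the equivalence generated by the
   gluing relation.  As both matches are injective, a node (hyperedge) of L1 is
   identified in S with one of L2 exactly when the two are glued directly.
   Since the interface K of a left-connected rule has no hyperedges and embeds
   into L, the pushout complement C2 of the second match covers S together with
   L2, meets L2 exactly in the image of the interface, and shares no hyperedge
   with it.  So the first match factors through C2 iff no hyperedge of L1 lands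
   on one of L2 and every node of L1 landing on a node of L2 lands on an
   interface node; symmetrically for the second match. *)

Lemma connect_invariant (T : finType) (Y : Type) (R : rel T) (F : T -> Y) :
  (forall x y, R x y -> F x = F y) -> forall x y, connect R x y -> F x = F y.
Proof.
move=> FR x _ /connectP [p Rp ->]; elim: p x Rp => //= z p IHp x /andP [Rxz Rp].
by rewrite (FR _ _ Rxz); apply: IHp.
Qed.

Lemma connect_sum_cross (X1 X2 : finType) (Z : Type) (R : rel (X1 + X2))
    (q : X1 + X2 -> Z) :
  symmetric R -> (forall x y, R x y -> q x = q y) ->
  injective (q \o inl) -> injective (q \o inr) ->
  forall a b, q (inl a) = q (inr b) -> connect R (inl a) (inr b) -> R (inl a) (inr b).
Proof.
move=> symR qR q1_inj q2_inj a b qab conn_ab; apply/negPn/negP => notRab.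
suff cl_a : closed R (pred1 (inl a)).
  by move: (closed_connect cl_a conn_ab); rewrite !inE eqxx.
apply: intro_closed; first exact: sym_connect_sym.
move=> x y Rxy /eqP xa; rewrite inE; subst x.
case: y Rxy => y Ray; have := qR _ _ Ray.
- by move/esym/q1_inj => ->.
- by rewrite qab => /q2_inj b_y; rewrite b_y Ray in notRab.
Qed.

Section GluingRelation.
Variables (Y X : finType) (p1 p2 : Y -> X).

Definition glue_rel : rel X := fun x x' =>
  [exists y, (p1 y == x) && (p2 y == x')] || [exists y, (p1 y == x') && (p2 y == x)].

Lemma glue_relP x x' :
  reflect ((exists y, p1 y = x /\ p2 y = x') \/ (exists y, p1 y = x' /\ p2 y = x))
          (glue_rel x x').
Proof.
apply: (iffP orP) => [[] /existsP [y /andP [/eqP <- /eqP <-]]|[] [y [<- <-]]].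
- by left; exists y.
- by right; exists y.
- by left; apply/existsP; exists y; rewrite !eqxx.
- by right; apply/existsP; exists y; rewrite !eqxx.
Qed.

Lemma glue_rel_sym : symmetric glue_rel.
Proof. by move=> x x'; rewrite /glue_rel orbC. Qed.

Lemma glue_rel_invariant (Z : Type) (q : X -> Z) :
  (forall y, q (p1 y) = q (p2 y)) -> forall x x', glue_rel x x' -> q x = q x'.
Proof. by move=> qp x x' /glue_relP [] [y [<- <-]]. Qed.

Lemma glue_rel_root y : root glue_rel (p1 y) = root glue_rel (p2 y).
Proof.
apply/(rootP (sym_connect_sym glue_rel_sym))/connect1/glue_relP.
by left; exists y.
Qed.

End GluingRelation.

Lemma glue_sum_iff (X1 X2 Y : finType) (Z : Type) (p1 p2 : Y -> X1 + X2)
    (q : X1 + X2 -> Z) :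
  (forall y, q (p1 y) = q (p2 y)) ->
  injective (q \o inl) -> injective (q \o inr) ->
  (forall x x', q x = q x' -> connect (glue_rel p1 p2) x x') ->
  forall a b, q (inl a) = q (inr b) <->
    (exists y, p1 y = inl a /\ p2 y = inr b) \/ (exists y, p1 y = inr b /\ p2 y = inl a).
Proof.
move=> qp q1_inj q2_inj q_connect a b; split => [qab|/glue_relP]; last first.
  exact: glue_rel_invariant.
apply/glue_relP/(connect_sum_cross (q := q) (@glue_rel_sym _ _ p1 p2)) => //.
- exact: glue_rel_invariant.
- exact: q_connect.
Qed.

Section CoequaliserKernel.
Variables (Sg : signature) (G A : hyp Sg) (g1 g2 : mor G A).

Local Notation RV := (glue_rel (mV g1) (mV g2)).
Local Notation RE := (glue_rel (mE g1) (mE g2)).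

Lemma root_glue_rel_invariant (Z : Type) (F : hE A -> Z) :
  (forall y, F (mE g1 y) = F (mE g2 y)) -> forall e, F (root RE e) = F e.
Proof.
move=> Fg e; apply/esym/(connect_invariant _ (connect_root _ e)).
exact: glue_rel_invariant.
Qed.

(* Collapsing every gluing class onto its root gives a cocone under (g1, g2);
   a coequaliser factors through it, hence identifies only connected elements. *)
Definition glue_quot : hyp Sg.
Proof.
refine (@Hyp Sg (hV A) (hE A) (fun e : hE A => map (root RV) (hsrc e))
  (fun e : hE A => map (root RV) (htgt e)) (@hlab Sg A) _ _) => e.
- by rewrite size_map hsrc_ar.
- by rewrite size_map htgt_ar.
Defined.

Definition glue_quot_map : mor A glue_quot.
Proof.
refine (@Mor Sg A glue_quot (root RV) (root RE) _ _ _) => e /=.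
- apply: (root_glue_rel_invariant (F := fun e : hE A => map (root RV) (hsrc e))) => y.
  by rewrite !msrc -!map_comp; apply: eq_map => v /=; rewrite glue_rel_root.
- apply: (root_glue_rel_invariant (F := fun e : hE A => map (root RV) (htgt e))) => y.
  by rewrite !mtgt -!map_comp; apply: eq_map => v /=; rewrite glue_rel_root.
- by apply: (root_glue_rel_invariant (F := @hlab Sg A)) => y; rewrite !mlab.
Defined.

Variables (S : hyp Sg) (eps : mor A S).
Hypothesis eps_coeq : is_coeq g1 g2 eps.

Lemma coeq_factor_glue_quot : exists u : mor S glue_quot, mor_eq (mcomp eps u) glue_quot_map.
Proof.
case: eps_coeq => _ /(_ _ glue_quot_map) [|u [eps_u _]]; last by exists u.
by split=> y /=; apply: glue_rel_root.
Qed.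

Lemma coeq_kernelV x x' : mV eps x = mV eps x' -> connect RV x x'.
Proof.
have [u [uV _]] := coeq_factor_glue_quot => eps_xx'.
apply/(rootP (sym_connect_sym (@glue_rel_sym _ _ _ _))).
by move: (uV x) (uV x'); rewrite /= eps_xx' => -> ->.
Qed.

Lemma coeq_kernelE e e' : mE eps e = mE eps e' -> connect RE e e'.
Proof.
have [u [_ uE]] := coeq_factor_glue_quot => eps_ee'.
apply/(rootP (sym_connect_sym (@glue_rel_sym _ _ _ _))).
by move: (uE e) (uE e'); rewrite /= eps_ee' => -> ->.
Qed.

End CoequaliserKernel.

Section Morphisms.
Variable Sg : signature.

Definition mor_id (H : hyp Sg) : mor H H.
Proof. by refine (@Mor Sg H H id id _ _ _) => e; rewrite ?map_id. Defined.

Lemma mor_factor_through (L C S : hyp Sg) (m : mor L S) (c : mor C S) :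
  injective (mV c) -> (forall v, exists x, mV c x = mV m v) ->
  (forall e, exists x, mE c x = mE m e) -> exists m' : mor L C, mor_eq (mcomp m' c) m.
Proof.
move=> c_injV mV_in mE_in.
have mV_in' v : exists x, mV c x == mV m v by have [x <-] := mV_in v; exists x.
have mE_in' e : exists x, mE c x == mE m e by have [x <-] := mE_in e; exists x.
pose m'V v := xchoose (mV_in' v); pose m'E e := xchoose (mE_in' e).
have m'VP v : mV c (m'V v) = mV m v by apply/eqP/(xchooseP (mV_in' v)).
have m'EP e : mE c (m'E e) = mE m e by apply/eqP/(xchooseP (mE_in' e)).
have m'_map s : map (mV c) (map m'V s) = map (mV m) s.
  by rewrite -map_comp; apply: eq_map => v /=; rewrite m'VP.
unshelve eexists (@Mor Sg L C m'V m'E _ _ _) => [e|e|e|].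
- by apply: (inj_map c_injV); rewrite -msrc m'EP msrc m'_map.
- by apply: (inj_map c_injV); rewrite -mtgt m'EP mtgt m'_map.
- by rewrite -(mlab c) m'EP mlab.
- by split=> x /=; [apply: m'VP | apply: m'EP].
Qed.

Lemma discrete_coprod (G H : hyp Sg) : discrete G -> discrete H -> discrete (coprod G H).
Proof. by rewrite /discrete /= card_sum => -> ->. Qed.

End Morphisms.

Section PushoutAlongMono.
Variables (Sg : signature) (K L C D : hyp Sg).
Variables (f : mor K L) (g : mor K C) (h : mor L D) (k : mor C D).
Hypotheses (po : is_pushout f g h k) (f_injV : injective (mV f)) (K_discrete : discrete K).

Definition redirectV (v : hV L) : hV C + hV L :=
  if [pick a | mV f a == v] is Some a then inl (mV g a) else inr v.

(* A cocone under (f, g) in which C embeds, the hyperedges of L stay apart from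
   those of C, and the nodes of L in the image of f are redirected into C. *)
Definition po_model : hyp Sg.
Proof.
refine (@Hyp Sg (hV C + hV L)%type (hE C + hE L)%type
  (fun e => match e with inl c => map inl (hsrc c) | inr e => map redirectV (hsrc e) end)
  (fun e => match e with inl c => map inl (htgt c) | inr e => map redirectV (htgt e) end)
  (fun e => match e with inl c => hlab c | inr e => hlab e end) _ _).
- by case=> e; rewrite size_map hsrc_ar.
- by case=> e; rewrite size_map htgt_ar.
Defined.

Definition po_model_inl : mor C po_model.
Proof. by refine (@Mor Sg C po_model inl inl _ _ _). Defined.

Definition po_model_inr : mor L po_model.
Proof. by refine (@Mor Sg L po_model redirectV inr _ _ _). Defined.

Definition po_model_outV (x : hV po_model) : hV D :=
  match x with inl c => mV k c | inr v => mV h v end.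

Lemma po_model_outV_redirect v : po_model_outV (redirectV v) = mV h v.
Proof.
rewrite /redirectV; case: pickP => [a /eqP <-|//] /=.
exact/esym/(po.1.1 a).
Qed.

Definition po_model_out : mor po_model D.
Proof.
refine (@Mor Sg po_model D po_model_outV
  (fun e => match e with inl c => mE k c | inr e => mE h e end) _ _ _).
- case=> e /=; rewrite ?msrc -map_comp //.
  by apply: eq_map => v /=; rewrite po_model_outV_redirect.
- case=> e /=; rewrite ?mtgt -map_comp //.
  by apply: eq_map => v /=; rewrite po_model_outV_redirect.
- by case=> e /=; rewrite mlab.
Defined.

Lemma po_model_cocone : mor_eq (mcomp f po_model_inr) (mcomp g po_model_inl).
Proof.
split=> a /=; last by move/card0_eq: K_discrete => /(_ a); rewrite inE.
rewrite /redirectV; case: pickP => [a' /eqP /f_injV -> //|/(_ a)].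
by rewrite eqxx.
Qed.

Lemma pushout_to_model : exists u : mor D po_model,
  [/\ mor_eq (mcomp h u) po_model_inr, mor_eq (mcomp k u) po_model_inl &
      mor_eq (mcomp u po_model_out) (mor_id D)].
Proof.
have [u [[huV huE] [kuV kuE] _]] := po.2 _ _ _ po_model_cocone.
exists u; split=> //.
have [u0 [_ _ unique_u0]] := po.2 _ _ _ po.1.
have [idV idE] := unique_u0 (mor_id D) (conj (fun=> erefl) (fun=> erefl))
                                       (conj (fun=> erefl) (fun=> erefl)).
have [uV uE] : mor_eq u0 (mcomp u po_model_out).
  apply: unique_u0; split=> x /=.
  - by have /= -> := huV x; rewrite po_model_outV_redirect.
  - by have /= -> := huE x.
  - by have /= -> := kuV x.
  - by have /= -> := kuE x.
by split=> x; [rewrite -uV idV | rewrite -uE idE].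
Qed.

Lemma pushout_injV : injective (mV k).
Proof.
have [u [_ [kuV _] _]] := pushout_to_model.
by move=> c c' kcc'; move: (kuV c) (kuV c') => /=; rewrite kcc' => -> [->].
Qed.

Lemma pushout_meetV v c : mV h v = mV k c -> exists a, mV f a = v.
Proof.
have [u [[huV _] [kuV _] _]] := pushout_to_model => hv_kc.
move: (huV v) (kuV c) => /=; rewrite hv_kc => ->; rewrite /redirectV.
by case: pickP => [a /eqP <- _ | //]; exists a.
Qed.

Lemma pushout_disjointE e c : mE h e <> mE k c.
Proof.
have [u [[_ huE] [_ kuE] _]] := pushout_to_model => he_kc.
by move: (huE e) (kuE c) => /=; rewrite he_kc => ->.
Qed.

Lemma pushout_coverV s : (exists v, mV h v = s) \/ (exists c, mV k c = s).
Proof.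
have [u [_ _ [uV _]]] := pushout_to_model.
by move: (uV s) => /=; case: (mV u s) => x <-; [right | left]; exists x.
Qed.

Lemma pushout_coverE s : (exists e, mE h e = s) \/ (exists c, mE k c = s).
Proof.
have [u [_ _ [_ uE]]] := pushout_to_model.
by move: (uE s) => /=; case: (mE u s) => x <-; [right | left]; exists x.
Qed.

Lemma pushout_factor_iff (M : hyp Sg) (m : mor M D) :
  (exists m' : mor M C, mor_eq (mcomp m' k) m) <->
  (forall e e', mE m e <> mE h e') /\
  (forall v v', mV m v = mV h v' -> exists a, mV f a = v').
Proof.
split=> [[m' [m'V m'E]] | [m_h_disjE m_h_meetV]].
  split=> [e e' | v v'].
  - by rewrite -(m'E e) => /esym/pushout_disjointE.
  - by rewrite -(m'V v) => /esym/pushout_meetV.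
apply: mor_factor_through pushout_injV _ _ => [v | e].
- case: (pushout_coverV (mV m v)) => [[v' hv'] | //].
  have [a fa] := m_h_meetV _ _ (esym hv').
  by exists (mV g a); rewrite -hv' -fa; exact: (esym (po.1.1 a)).
- case: (pushout_coverE (mE m e)) => [[e' he'] | //].
  by case: (m_h_disjE e e').
Qed.

End PushoutAlongMono.

Theorem mainTheorem4 (Sg : signature) (Rs : seq (rule Sg))
  (HRs : left_connected_system Rs)
  (r1 r2 : rule Sg) (Hr1 : rule_in r1 Rs) (Hr2 : rule_in r2 Rs)
  (G : hyp Sg) (g1 g2 : mor G (coprod (rL r1) (rL r2)))
  (S : hyp Sg) (eps : mor (coprod (rL r1) (rL r2)) S)
  (Hcoeq : is_coeq g1 g2 eps)
  (Hpre : yields_precritical eps)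
  (C1 : hyp Sg) (k1 : mor (coprod (rI r1) (rO r1)) C1) (c1 : mor C1 S)
  (HC1 : is_pushout (rl r1) k1 (mcomp (@iota1 Sg (rL r1) (rL r2)) eps) c1)
  (C2 : hyp Sg) (k2 : mor (coprod (rI r2) (rO r2)) C2) (c2 : mor C2 S)
  (HC2 : is_pushout (rl r2) k2 (mcomp (@iota2 Sg (rL r1) (rL r2)) eps) c2) :
  parallel (mcomp (@iota1 Sg (rL r1) (rL r2)) eps) (mcomp (@iota2 Sg (rL r1) (rL r2)) eps) c1 c2 <->
  ((forall (e1 : hE (rL r1)) (e2 : hE (rL r2)),
       ~ glued_E g1 g2 (inl e1) (inr e2) /\ ~ glued_E g1 g2 (inr e2) (inl e1)) /\
   (forall (v1 : hV (rL r1)) (v2 : hV (rL r2)),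
       (glued_V g1 g2 (inl v1) (inr v2) \/ glued_V g1 g2 (inr v2) (inl v1)) ->
       in_Linterface v1 /\ in_Linterface v2)).
Proof.
have [[dI1 dO1] _ _ [l1_injV _] _] := HRs _ Hr1.
have [[dI2 dO2] _ _ [l2_injV _] _] := HRs _ Hr2.
have [[eps1_injV eps1_injE] [eps2_injV eps2_injE] _] := Hpre.
have [[g_epsV g_epsE] _] := Hcoeq.
have glV v1 v2 : mV eps (inl v1) = mV eps (inr v2) <->
    glued_V g1 g2 (inl v1) (inr v2) \/ glued_V g1 g2 (inr v2) (inl v1).
  exact: glue_sum_iff g_epsV eps1_injV eps2_injV (coeq_kernelV Hcoeq) v1 v2.
have glE e1 e2 : mE eps (inl e1) = mE eps (inr e2) <->
    glued_E g1 g2 (inl e1) (inr e2) \/ glued_E g1 g2 (inr e2) (inl e1).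
  exact: glue_sum_iff g_epsE eps1_injE eps2_injE (coeq_kernelE Hcoeq) e1 e2.
have factor1 := pushout_factor_iff HC2 l2_injV (discrete_coprod dI2 dO2)
                  (mcomp (@iota1 Sg (rL r1) (rL r2)) eps).
have factor2 := pushout_factor_iff HC1 l1_injV (discrete_coprod dI1 dO1)
                  (mcomp (@iota2 Sg (rL r1) (rL r2)) eps).
split=> [[/factor1 [disjE12 meetV12] /factor2 [_ meetV21]] | [unglued_E interfaceV]].
  split=> [e1 e2 | v1 v2 /glV glued12].
  - by split=> glued12; apply: (disjE12 e1 e2); apply/glE; [left | right].
  - by split; [apply: (meetV21 v2 v1) | apply: (meetV12 v1 v2)].
split; [apply/factor1 | apply/factor2]; split.
- by move=> e1 e2 /glE; case: (unglued_E e1 e2) => ? ? [].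
- by move=> v1 v2 /glV/interfaceV [].
- by move=> e2 e1 /esym/glE; case: (unglued_E e1 e2) => ? ? [].
- by move=> v2 v1 /esym/glV/interfaceV [].
Qed.
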